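(* Let $\Sigma$ be a linear subspace of $\mathbb{R}^d$ and $\zeta_n\in\Sigma\cap S^{d-1}$. Then, after passing to a subsequence, there exist orthonormal vectors $\zeta^1,\dots,\zeta^k\in\Sigma$, with $1\le k\le\dim\Sigma$, such that $E(\zeta_n)\to E(\zeta^1,\dots,\zeta^k)$ as $n\to\infty$, in the sense that for every $z\in\mathbb{Z}^d$, $\mathbf 1_{E(\zeta_n)}(z)\to\mathbf 1_{E(\zeta^1,\dots,\zeta^k)}(z)$.
   Context: For an orthogonal collection of nonzero vectors $\zeta^1,\dots,\zeta^k\in\mathbb{R}^d$, $E(\zeta^1,\dots,\zeta^k)=\bigcup_{j=1}^k\{z\in\mathbb{Z}^d: z\cdot\zeta^i=0\text{ for all }1\le i\le j-1,\ \text{and } z\cdot\zeta^j>0\}$ (for $j=1$ the first condition is vacuous). In particular $E(\zeta)=\{z\in\mathbb{Z}^d:z\cdot\zeta>0\}$. *)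

From Stdlib Require Import Reals ZArith List ClassicalEpsilon.
Open Scope R_scope.

(* Vectors of R^d are represented by functions nat -> R whose coordinates
   with index >= d vanish; points of Z^d by functions nat -> Z (only the
   coordinates of index < d are ever used). *)
Definition vec := nat -> R.
Definition zvec := nat -> Z.

Definition vzero : vec := fun _ => 0.

Fixpoint sumR (n : nat) (f : nat -> R) : R :=
  match n with
  | O => 0
  | S m => sumR m f + f m
  end.

Definition in_Rd (d : nat) (x : vec) : Prop := forall i, (d <= i)%nat -> x i = 0.

Definition dot (d : nat) (x y : vec) : R := sumR d (fun i => x i * y i).

Definition zdot (d : nat) (z : zvec) (zeta : vec) : R :=
  sumR d (fun i => IZR (z i) * zeta i).

Definition is_subspace (d : nat) (S : vec -> Prop) : Prop :=
  (forall x, S x -> in_Rd d x) /\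
  S vzero /\
  (forall x y, S x -> S y -> S (fun i => x i + y i)) /\
  (forall (a : R) x, S x -> S (fun i => a * x i)).

Definition lincomb (c : list R) (B : list vec) : vec :=
  fun i => sumR (length B) (fun j => nth j c 0 * nth j B vzero i).

Definition lin_indep (B : list vec) : Prop :=
  forall c : list R, length c = length B ->
    (forall i, lincomb c B i = 0) -> forall j, (j < length B)%nat -> nth j c 0 = 0.

(* B is a basis of the subspace S; dim S = length B *)
Definition basis_of (S : vec -> Prop) (B : list vec) : Prop :=
  (forall j, (j < length B)%nat -> S (nth j B vzero)) /\
  lin_indep B /\
  (forall x, S x -> exists c, length c = length B /\ forall i, x i = lincomb c B i).

Definition Ezeta (d : nat) (zeta : vec) (z : zvec) : Prop := zdot d z zeta > 0.

(* E(zeta^1, ..., zeta^k), the zeta^j given as a list (0-indexed) *)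
Definition Ezetas (d : nat) (zs : list vec) (z : zvec) : Prop :=
  exists j, (j < length zs)%nat /\
    (forall i, (i < j)%nat -> zdot d z (nth i zs vzero) = 0) /\
    zdot d z (nth j zs vzero) > 0.

Definition orthonormal (d : nat) (zs : list vec) : Prop :=
  forall i j, (i < length zs)%nat -> (j < length zs)%nat ->
    dot d (nth i zs vzero) (nth j zs vzero) = if Nat.eqb i j then 1 else 0.

Definition indic (P : Prop) : R :=
  if excluded_middle_informative P then 1 else 0.

From Pilot Require Import Defs.
From Stdlib Require Import Reals ZArith List ClassicalEpsilon Classical Lia Lra FunctionalExtensionality.
From mathcomp Require all_boot all_algebra Rstruct.
Open Scope R_scope.

(* Compactness of the unit sphere and closedness of the subspace give a subsequence of
   [zeta_n] converging to a unit vector [l] of Sigma, the first vector of the limit family.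
   If [z.l <> 0], the sign of [z.zeta_n] is eventually that of [z.l].  Writing
   [zeta_n = (zeta_n.l) l + r_n] with [r_n] orthogonal to [l], on the hyperplane [z.l = 0]
   the sign of [z.zeta_n] is that of [z.r_n]: either [r_n = 0] along a subsequence and the
   family is [l] alone, or the normalized [r_n] are unit vectors of Sigma orthogonal to [l]
   and the argument recurses there.  Orthonormal families in Sigma have at most dim Sigma
   elements, which bounds both the recursion depth and the length of the family. *)

Lemma sumR_ext n f g : (forall i, (i < n)%nat -> f i = g i) -> sumR n f = sumR n g.
Proof.
  induction n as [|n IH]; intros Hfg; simpl; [reflexivity|].
  rewrite IH, Hfg by (try intros; try apply Hfg; lia). reflexivity.
Qed.

Lemma sumR_plus n f g : sumR n (fun i => f i + g i) = sumR n f + sumR n g.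
Proof. induction n as [|n IH]; simpl; [|rewrite IH]; lra. Qed.

Lemma sumR_scal n a f : sumR n (fun i => a * f i) = a * sumR n f.
Proof. induction n as [|n IH]; simpl; [|rewrite IH]; lra. Qed.

Lemma sumR_zero n : sumR n (fun _ => 0) = 0.
Proof. induction n as [|n IH]; simpl; [|rewrite IH]; lra. Qed.

Lemma sumR_nonneg n f : (forall i, (i < n)%nat -> 0 <= f i) -> 0 <= sumR n f.
Proof.
  induction n as [|n IH]; intros Hf; simpl; [lra|].
  assert (0 <= sumR n f) by (apply IH; intros; apply Hf; lia).
  assert (0 <= f n) by (apply Hf; lia). lra.
Qed.

Lemma sumR_term_le n f i : (forall j, (j < n)%nat -> 0 <= f j) -> (i < n)%nat -> f i <= sumR n f.
Proof.
  induction n as [|n IH]; intros Hf Hi; simpl; [lia|].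
  destruct (Nat.eq_dec i n) as [->|Hin].
  - assert (0 <= sumR n f) by (apply sumR_nonneg; intros; apply Hf; lia). lra.
  - assert (f i <= sumR n f) by (apply IH; [intros; apply Hf|]; lia).
    assert (0 <= f n) by (apply Hf; lia). lra.
Qed.

Lemma sumR_swap n m (F : nat -> nat -> R) :
  sumR n (fun i => sumR m (fun j => F i j)) = sumR m (fun j => sumR n (fun i => F i j)).
Proof.
  induction n as [|n IH]; simpl.
  - symmetry. apply sumR_zero.
  - rewrite IH, <- sumR_plus. reflexivity.
Qed.

Lemma sumR_delta n (a : nat -> R) j : (j < n)%nat ->
  sumR n (fun i => a i * (if Nat.eqb i j then 1 else 0)) = a j.
Proof.
  induction n as [|n IH]; intros Hj; simpl; [lia|].
  destruct (Nat.eq_dec j n) as [->|Hjn].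
  - rewrite Nat.eqb_refl, (sumR_ext n _ (fun _ => 0)), sumR_zero; [lra|].
    intros i Hi. replace (Nat.eqb i n) with false by (symmetry; apply Nat.eqb_neq; lia). lra.
  - rewrite IH by lia. replace (Nat.eqb n j) with false by (symmetry; apply Nat.eqb_neq; lia). lra.
Qed.

Lemma cv_const c : Un_cv (fun _ => c) c.
Proof.
  intros eps Heps. exists 0%nat. intros n _. unfold Rdist. rewrite Rminus_diag, Rabs_R0. exact Heps.
Qed.

Lemma cv_eventually_const u l : (exists N, forall n, (n >= N)%nat -> u n = l) -> Un_cv u l.
Proof.
  intros [N HN] eps Heps. exists N. intros n Hn.
  unfold Rdist. rewrite HN, Rminus_diag, Rabs_R0 by exact Hn. exact Heps.
Qed.

Lemma cv_eventually_pos u l : Un_cv u l -> l > 0 -> exists N, forall n, (n >= N)%nat -> u n > 0.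
Proof.
  intros Hu Hl. destruct (Hu l Hl) as [N HN]. exists N. intros n Hn.
  specialize (HN n Hn). unfold Rdist in HN. apply Rabs_def2 in HN. lra.
Qed.

Lemma cv_eventually_neg u l : Un_cv u l -> l < 0 -> exists N, forall n, (n >= N)%nat -> u n < 0.
Proof.
  intros Hu Hl. destruct (Hu (- l) ltac:(lra)) as [N HN]. exists N. intros n Hn.
  specialize (HN n Hn). unfold Rdist in HN. apply Rabs_def2 in HN. lra.
Qed.

Lemma sumR_cv n (f : nat -> nat -> R) (l : nat -> R) :
  (forall i, (i < n)%nat -> Un_cv (fun k => f k i) (l i)) ->
  Un_cv (fun k => sumR n (f k)) (sumR n l).
Proof.
  induction n as [|n IH]; intros Hf; simpl.
  - apply cv_const.
  - apply CV_plus; [apply IH; intros|]; apply Hf; lia.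
Qed.

Lemma dot_sym d x y : dot d x y = dot d y x.
Proof. apply sumR_ext. intros; lra. Qed.

Lemma dot_add_l d x y z : dot d (fun t => x t + y t) z = dot d x z + dot d y z.
Proof. unfold dot. rewrite <- sumR_plus. apply sumR_ext. intros; lra. Qed.

Lemma dot_scal_l d a x z : dot d (fun t => a * x t) z = a * dot d x z.
Proof. unfold dot. rewrite <- sumR_scal. apply sumR_ext. intros; lra. Qed.

Lemma dot_sumR_l d m (g : nat -> vec) z :
  dot d (fun t => sumR m (fun i => g i t)) z = sumR m (fun i => dot d (g i) z).
Proof.
  unfold dot. rewrite <- sumR_swap. apply sumR_ext. intros t _.
  rewrite Rmult_comm, <- sumR_scal. apply sumR_ext. intros; lra.
Qed.

Lemma dot_vzero_l d x : dot d vzero x = 0.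
Proof.
  transitivity (sumR d (fun _ => 0)); [apply sumR_ext; intros; unfold vzero; ring|apply sumR_zero].
Qed.

Lemma dot_self_nonneg d x : 0 <= dot d x x.
Proof. apply sumR_nonneg. intros. nra. Qed.

Lemma sqr_coord_le_dot d x t : (t < d)%nat -> x t * x t <= dot d x x.
Proof. apply (sumR_term_le d (fun i => x i * x i)). intros; nra. Qed.

Lemma dot_self_eq0 d x : dot d x x = 0 -> forall t, (t < d)%nat -> x t = 0.
Proof. intros Hx t Ht. pose proof (sqr_coord_le_dot d x t Ht). nra. Qed.

Lemma dot_normalize d x : dot d x x <> 0 ->
  dot d (fun t => / sqrt (dot d x x) * x t) (fun t => / sqrt (dot d x x) * x t) = 1.
Proof.
  intros Hx. pose proof (dot_self_nonneg d x).
  assert (0 < sqrt (dot d x x)) by (apply sqrt_lt_R0; lra).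
  set (c := / sqrt (dot d x x)).
  rewrite dot_scal_l, dot_sym, dot_scal_l. unfold c.
  rewrite <- (sqrt_sqrt (dot d x x)) at 3 by lra. field. lra.
Qed.

Lemma dot_cv d (u v : nat -> vec) x y :
  (forall t, Un_cv (fun n => u n t) (x t)) -> (forall t, Un_cv (fun n => v n t) (y t)) ->
  Un_cv (fun n => dot d (u n) (v n)) (dot d x y).
Proof.
  intros Hu Hv. apply (sumR_cv d (fun n i => u n i * v n i)). intros i _. apply CV_mult; auto.
Qed.

Lemma zdot_add d z x y : zdot d z (fun t => x t + y t) = zdot d z x + zdot d z y.
Proof. unfold zdot. rewrite <- sumR_plus. apply sumR_ext. intros; lra. Qed.

Lemma zdot_scal d z a x : zdot d z (fun t => a * x t) = a * zdot d z x.
Proof. unfold zdot. rewrite <- sumR_scal. apply sumR_ext. intros; lra. Qed.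

Lemma zdot_vanishing d z x : (forall t, (t < d)%nat -> x t = 0) -> zdot d z x = 0.
Proof.
  intros Hx. transitivity (sumR d (fun _ => 0)); [|apply sumR_zero].
  apply sumR_ext. intros t Ht. rewrite Hx by exact Ht. ring.
Qed.

Lemma zdot_cv d z (u : nat -> vec) x :
  (forall t, Un_cv (fun n => u n t) (x t)) -> Un_cv (fun n => zdot d z (u n)) (zdot d z x).
Proof. intros Hu. exact (dot_cv d (fun _ i => IZR (z i)) u _ x (fun t => cv_const _) Hu). Qed.

Definition strictly_increasing (phi : nat -> nat) : Prop :=
  forall n m, (n < m)%nat -> (phi n < phi m)%nat.

Lemma strictly_increasing_S phi :
  (forall n, (phi n < phi (S n))%nat) -> strictly_increasing phi.
Proof. intros H n m Hnm. induction Hnm; [apply H|]. specialize (H m). lia. Qed.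

Lemma strictly_increasing_ge phi : strictly_increasing phi -> forall n, (n <= phi n)%nat.
Proof. intros H n. induction n; [lia|]. specialize (H n (S n) ltac:(lia)). lia. Qed.

Lemma strictly_increasing_comp phi psi :
  strictly_increasing phi -> strictly_increasing psi -> strictly_increasing (fun n => phi (psi n)).
Proof. intros Hphi Hpsi n m Hnm. apply Hphi, Hpsi, Hnm. Qed.

Lemma cv_subseq u l phi : Un_cv u l -> strictly_increasing phi -> Un_cv (fun n => u (phi n)) l.
Proof.
  intros Hu Hphi eps Heps. destruct (Hu eps Heps) as [N HN]. exists N.
  intros n Hn. apply HN. pose proof (strictly_increasing_ge phi Hphi n). lia.
Qed.

Fixpoint select_seq (sel : nat -> nat -> nat) (k : nat) : nat :=
  match k with
  | O => sel O O
  | S k => sel (S k) (S (select_seq sel k))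
  end.

Lemma subseq_select (P : nat -> nat -> Prop) :
  (forall k N, exists n, (N <= n)%nat /\ P k n) ->
  exists phi, strictly_increasing phi /\ forall k, P k (phi k).
Proof.
  intros HP.
  set (sel k N := proj1_sig (constructive_indefinite_description _ (HP k N))).
  assert (Hsel : forall k N, (N <= sel k N)%nat /\ P k (sel k N)).
  { intros k N. unfold sel. destruct constructive_indefinite_description; auto. }
  exists (select_seq sel). split.
  - apply strictly_increasing_S. intros n. apply Hsel.
  - intros [|k]; apply Hsel.
Qed.

Lemma bounded_cv_subseq (u : nat -> R) a b : (forall n, a <= u n <= b) ->
  exists phi, strictly_increasing phi /\ exists l, Un_cv (fun n => u (phi n)) l.
Proof.
  intros Hu. destruct (Bolzano_Weierstrass u _ (compact_P3 a b) Hu) as [l Hl].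
  destruct (subseq_select (fun k p => Rabs (u p - l) < / INR (S k))) as [phi [Hphi Hclose]].
  { intros k N.
    assert (Hpos : 0 < / INR (S k)) by (apply Rinv_0_lt_compat, lt_0_INR; lia).
    destruct (Hl (disc l (mkposreal _ Hpos)) N) as [p Hp].
    { exists (mkposreal _ Hpos). intros y Hy. exact Hy. }
    exists p. exact Hp. }
  exists phi. split; [exact Hphi|]. exists l.
  intros eps Heps. destruct (archimed_cor1 eps Heps) as [N [HN HN0]].
  exists N. intros n Hn. apply Rlt_trans with (/ INR (S n)); [apply Hclose|].
  apply Rle_lt_trans with (/ INR N); [|exact HN].
  apply Rinv_le_contravar; [apply lt_0_INR; exact HN0|apply le_INR; lia].
Qed.

Lemma bounded_vec_cv_subseq (u : nat -> vec) a b k :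
  (forall n t, (t < k)%nat -> a <= u n t <= b) ->
  exists phi, strictly_increasing phi /\ exists l : vec,
    forall t, (t < k)%nat -> Un_cv (fun n => u (phi n) t) (l t).
Proof.
  induction k as [|k IH]; intros Hu.
  - exists (fun n => n). split; [intros n m; auto|]. exists vzero. intros; lia.
  - destruct IH as [phi [Hphi [l Hl]]]; [intros; apply Hu; lia|].
    destruct (bounded_cv_subseq (fun n => u (phi n) k) a b) as [psi [Hpsi [lk Hlk]]];
      [intros; apply Hu; lia|].
    exists (fun n => phi (psi n)). split; [apply strictly_increasing_comp; auto|].
    exists (fun t => if Nat.eq_dec t k then lk else l t).
    intros t Ht. destruct (Nat.eq_dec t k) as [->|Htk]; [exact Hlk|].
    apply (cv_subseq (fun n => u (phi n) t)); [apply Hl; lia|exact Hpsi].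
Qed.

Lemma unit_vec_cv_subseq d (u : nat -> vec) :
  (forall n, in_Rd d (u n) /\ dot d (u n) (u n) = 1) ->
  exists phi, strictly_increasing phi /\ exists l : vec, in_Rd d l /\
    forall t, Un_cv (fun n => u (phi n) t) (l t).
Proof.
  intros Hu.
  destruct (bounded_vec_cv_subseq u (-1) 1 d) as [phi [Hphi [l Hl]]].
  { intros n t Ht. pose proof (sqr_coord_le_dot d (u n) t Ht) as Hsq. rewrite (proj2 (Hu n)) in Hsq.
    split; nra. }
  exists phi. split; [exact Hphi|].
  exists (fun t => if lt_dec t d then l t else 0). split.
  - intros t Ht. destruct (lt_dec t d); [lia|reflexivity].
  - intros t. destruct (lt_dec t d) as [Ht|Ht]; [apply Hl, Ht|].
    apply cv_eventually_const. exists 0%nat. intros n _. apply (proj1 (Hu (phi n))). lia.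
Qed.

Module OrthonormalRank.
Import all_boot all_algebra Rstruct.
Import GRing.Theory.
Local Open Scope ring_scope.

Lemma sumR_big (n : nat) (f : nat -> R) : sumR n f = \sum_(i < n) f i.
Proof. by elim: n => [|n IHn] /=; rewrite ?big_ord0 // big_ord_recr /= IHn. Qed.

Lemma mxrank_orthonormal_le m k n (A : 'M[R]_(m, k)) (C : 'M[R]_(m, n)) (B : 'M[R]_(n, k)) :
  A *m A^T = 1%:M -> A = C *m B -> (m <= n)%N.
Proof.
move=> AAT1 defA; have <- : \rank (A *m A^T) = m by rewrite AAT1 mxrank1.
apply: leq_trans (mxrankM_maxl _ _) _; rewrite defA.
exact: leq_trans (mxrankM_maxl _ _) (rank_leq_col _).
Qed.

Definition rows_mx m k (A : list vec) : 'M[R]_(m, k) :=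
  \matrix_(i < m, t < k) List.nth i A vzero t.

Lemma rows_mx_orthonormal d (A : list vec) : Defs.orthonormal d A ->
  rows_mx (length A) d A *m (rows_mx (length A) d A)^T = 1%:M.
Proof.
move=> orthA; apply/matrixP => i j; rewrite !mxE.
transitivity (dot d (List.nth i A vzero) (List.nth j A vzero)).
  by rewrite /dot sumR_big; apply: eq_bigr => t _; rewrite !mxE.
rewrite orthA; try exact/ltP.
case: (Nat.eqb_spec i j) => [/val_inj -> | neq_ij]; first by rewrite eqxx.
by have /negbTE -> : i != j by apply/eqP => eq_ij; apply: neq_ij; rewrite eq_ij.
Qed.

Lemma orthonormal_length_le_span d n (A B : list vec) (C : nat -> nat -> R) :
  Defs.orthonormal d A ->
  (forall i t, (i < length A)%coq_nat -> (t < d)%coq_nat ->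
     List.nth i A vzero t = sumR n (fun j => C i j * List.nth j B vzero t)) ->
  (length A <= n)%coq_nat.
Proof.
move=> orthA defA; apply/leP.
apply: (@mxrank_orthonormal_le _ _ _ _ (\matrix_(i < length A, j < n) C i j) (rows_mx n d B)
  (rows_mx_orthonormal d A orthA)).
apply/matrixP => i t; rewrite !mxE defA ?sumR_big; try exact/ltP.
by apply: eq_bigr => j _; rewrite !mxE.
Qed.

Lemma orthonormal_length_le_dim d (A : list vec) : Defs.orthonormal d A -> (length A <= d)%coq_nat.
Proof.
move=> orthA; apply/leP.
exact: mxrank_orthonormal_le (rows_mx_orthonormal d A orthA) (esym (mulmx1 _)).
Qed.

End OrthonormalRank.

Definition all_in (V : vec -> Prop) (E : list vec) : Prop :=
  forall j, (j < length E)%nat -> V (nth j E vzero).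

Lemma subspace_sumR d V m (g : nat -> vec) : is_subspace d V ->
  (forall i, (i < m)%nat -> V (g i)) -> V (fun t => sumR m (fun i => g i t)).
Proof.
  intros (_ & S0 & Sadd & _) Hg. induction m as [|m IH]; simpl; [exact S0|].
  apply (Sadd (fun t => sumR m (fun i => g i t)) (g m)); [apply IH; intros|]; apply Hg; lia.
Qed.

Lemma subspace_perp d V l : is_subspace d V -> is_subspace d (fun x => V x /\ dot d x l = 0).
Proof.
  intros (SRd & S0 & Sadd & Sscal). split; [|split; [|split]].
  - intros x [Sx _]. exact (SRd x Sx).
  - split; [exact S0|apply dot_vzero_l].
  - intros x y [Sx Hx] [Sy Hy]. split; [auto|]. rewrite dot_add_l. lra.
  - intros a x [Sx Hx]. split; [auto|]. rewrite dot_scal_l, Hx. ring.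
Qed.

Lemma orthonormal_cons d l E : orthonormal d E -> dot d l l = 1 ->
  (forall j, (j < length E)%nat -> dot d (nth j E vzero) l = 0) -> orthonormal d (l :: E).
Proof.
  intros HE Hl HlE [|i] [|j] Hi Hj; simpl in *.
  - exact Hl.
  - rewrite dot_sym. apply HlE. lia.
  - apply HlE. lia.
  - apply HE; lia.
Qed.

Definition orth_proj d (E : list vec) (y : vec) : vec :=
  fun t => sumR (length E) (fun i => dot d y (nth i E vzero) * nth i E vzero t).

Lemma orth_proj_dot d E y j : orthonormal d E -> (j < length E)%nat ->
  dot d (orth_proj d E y) (nth j E vzero) = dot d y (nth j E vzero).
Proof.
  intros HE Hj. unfold orth_proj.
  rewrite (dot_sumR_l d (length E) (fun i t => dot d y (nth i E vzero) * nth i E vzero t)).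
  rewrite <- (sumR_delta (length E) (fun i => dot d y (nth i E vzero)) j Hj).
  apply sumR_ext. intros i Hi. rewrite dot_scal_l, HE by assumption. reflexivity.
Qed.

Lemma orth_proj_in_subspace d V E y : is_subspace d V -> all_in V E -> V (orth_proj d E y).
Proof.
  intros HV HE. apply (subspace_sumR d V). exact HV.
  intros i Hi. apply (proj2 (proj2 (proj2 HV))), HE, Hi.
Qed.

Lemma maximal_orthonormal_exists d V : is_subspace d V ->
  exists E, orthonormal d E /\ all_in V E /\
    forall E', orthonormal d E' -> all_in V E' -> (length E' <= length E)%nat.
Proof.
  intros HV. apply NNPP. intros Hno.
  assert (Hlong : forall n, exists E, orthonormal d E /\ all_in V E /\ (n <= length E)%nat).
  { induction n as [|n [E (HE & HES & Hn)]].
    - exists nil. split; [|split]; [intros i j Hi; simpl in Hi; lia|intros j Hj; simpl in Hj; lia|lia].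
    - apply NNPP. intros Hno'. apply Hno. exists E. split; [exact HE|split; [exact HES|]].
      intros E' HE' HE'V. apply NNPP. intros Hlt. apply Hno'. exists E'.
      split; [exact HE'|split; [exact HE'V|lia]]. }
  destruct (Hlong (S d)) as [E (HE & _ & Hd)].
  pose proof (OrthonormalRank.orthonormal_length_le_dim d E HE). lia.
Qed.

Lemma maximal_orthonormal_spans d V E y : is_subspace d V -> orthonormal d E -> all_in V E ->
  (forall E', orthonormal d E' -> all_in V E' -> (length E' <= length E)%nat) ->
  V y -> forall t, y t = orth_proj d E y t.
Proof.
  intros HV HE HEV Hmax Vy t.
  pose proof HV as (VRd & _ & Vadd & Vscal).
  set (w := fun t => y t + (-1) * orth_proj d E y t).
  assert (Vw : V w) by (apply Vadd; [exact Vy|apply Vscal, orth_proj_in_subspace; auto]).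
  assert (Hw : forall j, (j < length E)%nat -> dot d w (nth j E vzero) = 0).
  { intros j Hj. unfold w. rewrite dot_add_l, dot_scal_l, orth_proj_dot by auto. ring. }
  (* Normalized, a nonzero residual [w] would extend the maximal family [E]. *)
  assert (Hww : dot d w w = 0).
  { apply NNPP. intros Hw0.
    assert (Hlonger : orthonormal d ((fun t => / sqrt (dot d w w) * w t) :: E)).
    { apply orthonormal_cons; [exact HE|apply dot_normalize, Hw0|].
      intros j Hj. rewrite dot_sym, dot_scal_l, Hw by exact Hj. ring. }
    assert (all_in V ((fun t => / sqrt (dot d w w) * w t) :: E)) as Hin.
    { intros [|j] Hj; simpl in *; [apply Vscal, Vw|apply HEV; lia]. }
    specialize (Hmax _ Hlonger Hin). simpl in Hmax. lia. }
  assert (w t = 0) as Hwt.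
  { destruct (lt_dec t d) as [Ht|Ht]; [exact (dot_self_eq0 d w Hww t Ht)|apply (VRd w Vw); lia]. }
  unfold w in Hwt. lra.
Qed.

Lemma subspace_closed d V (u : nat -> vec) x : is_subspace d V -> (forall n, V (u n)) ->
  (forall t, Un_cv (fun n => u n t) (x t)) -> V x.
Proof.
  intros HV Vu Hx.
  destruct (maximal_orthonormal_exists d V HV) as (E & HE & HEV & Hmax).
  replace x with (orth_proj d E x); [apply orth_proj_in_subspace; assumption|].
  apply functional_extensionality. intros t. apply (UL_sequence (fun n => u n t)); [|apply Hx].
  apply (Un_cv_ext (fun n => orth_proj d E (u n) t)).
  { intros n. symmetry. apply (maximal_orthonormal_spans d V); auto. }
  apply (sumR_cv _ (fun n i => dot d (u n) (nth i E vzero) * nth i E vzero t)).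
  intros i _. apply CV_mult; [apply dot_cv; [exact Hx|intros; apply cv_const]|apply cv_const].
Qed.

Lemma indic_iff (P Q : Prop) : (P <-> Q) -> indic P = indic Q.
Proof.
  intros HPQ. unfold indic.
  destruct (excluded_middle_informative P), (excluded_middle_informative Q); tauto.
Qed.

Lemma indic_true (P : Prop) : P -> indic P = 1.
Proof. intros HP. unfold indic. destruct (excluded_middle_informative P); tauto. Qed.

Lemma indic_false (P : Prop) : ~ P -> indic P = 0.
Proof. intros HP. unfold indic. destruct (excluded_middle_informative P); tauto. Qed.

Lemma Ezetas_nil d z : ~ Ezetas d nil z.
Proof. intros (j & Hj & _). simpl in Hj. lia. Qed.

Lemma Ezetas_cons_pos d z l zs : zdot d z l > 0 -> Ezetas d (l :: zs) z.
Proof. intros Hl. exists 0%nat. simpl. split; [lia|split; [intros; lia|exact Hl]]. Qed.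

Lemma Ezetas_cons_neg d z l zs : zdot d z l < 0 -> ~ Ezetas d (l :: zs) z.
Proof.
  intros Hl ([|j] & Hj & Hlt & Hpos); simpl in *; [lra|].
  specialize (Hlt 0%nat ltac:(lia)). simpl in Hlt. lra.
Qed.

Lemma Ezetas_cons_zero d z l zs : zdot d z l = 0 -> (Ezetas d (l :: zs) z <-> Ezetas d zs z).
Proof.
  intros Hl. split.
  - intros ([|j] & Hj & Hlt & Hpos); simpl in *; [lra|].
    exists j. split; [lia|split; [|exact Hpos]]. intros i Hi. apply (Hlt (S i)). lia.
  - intros (j & Hj & Hlt & Hpos). exists (S j). simpl. split; [lia|split; [|exact Hpos]].
    intros [|i] Hi; simpl; [exact Hl|apply Hlt; lia].
Qed.

Definition Ezeta_limit d (zeta : nat -> vec) (zs : list vec) : Prop :=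
  forall z, Un_cv (fun n => indic (Ezeta d (zeta n) z)) (indic (Ezetas d zs z)).

Lemma Ezeta_limit_nil d (eta : nat -> vec) : (forall n, eta n = vzero) -> Ezeta_limit d eta nil.
Proof.
  intros Heta z. rewrite indic_false by apply Ezetas_nil.
  apply cv_eventually_const. exists 0%nat. intros n _. apply indic_false.
  unfold Ezeta. rewrite Heta, zdot_vanishing by reflexivity. lra.
Qed.

Lemma Ezeta_limit_cons d (zeta eta : nat -> vec) (a : nat -> R) l zs :
  (forall z, Un_cv (fun n => zdot d z (zeta n)) (zdot d z l)) ->
  (forall n, 0 < a n) ->
  (forall z n, zdot d z l = 0 -> zdot d z (zeta n) = a n * zdot d z (eta n)) ->
  Ezeta_limit d eta zs -> Ezeta_limit d zeta (l :: zs).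
Proof.
  intros Hcv Ha Hsplit Heta z. unfold Ezeta.
  destruct (Rtotal_order (zdot d z l) 0) as [Hneg|[Hzero|Hpos]].
  - rewrite indic_false by (apply Ezetas_cons_neg, Hneg).
    apply cv_eventually_const. destruct (cv_eventually_neg _ _ (Hcv z) Hneg) as [N HN].
    exists N. intros n Hn. apply indic_false. specialize (HN n Hn). lra.
  - rewrite (indic_iff _ _ (Ezetas_cons_zero d z l zs Hzero)).
    apply (Un_cv_ext (fun n => indic (Ezeta d (eta n) z))); [|apply Heta].
    intros n. apply indic_iff. unfold Ezeta. rewrite Hsplit by exact Hzero.
    specialize (Ha n). split; intros; nra.
  - rewrite indic_true by (apply Ezetas_cons_pos, Hpos).
    apply cv_eventually_const. destruct (cv_eventually_pos _ _ (Hcv z) Hpos) as [N HN].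
    exists N. intros n Hn. apply indic_true. exact (HN n Hn).
Qed.

Lemma eventually_or_infinitely_often (Q : nat -> Prop) :
  (forall N, exists n, (N <= n)%nat /\ ~ Q n) \/ (exists N, forall n, (N <= n)%nat -> Q n).
Proof.
  destruct (classic (forall N, exists n, (N <= n)%nat /\ ~ Q n)) as [Hinf|Hfin]; [left; exact Hinf|].
  right. apply not_all_ex_not in Hfin. destruct Hfin as [N HN]. exists N. intros n Hn.
  apply NNPP. intros HQ. apply HN. exists n. auto.
Qed.

(* [zeta_n = (zeta_n.l) l + r_n] with [r_n] orthogonal to [l]; along a subsequence either
   [r_n = 0] or [r_n] is a positive multiple [a_n eta_n] of a unit vector. *)
Lemma split_off_unit_subseq d V (zeta : nat -> vec) l :
  is_subspace d V -> V l -> dot d l l = 1 -> (forall n, V (zeta n)) ->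
  exists phi a eta, strictly_increasing phi /\ (forall n, 0 < a n) /\
    (forall z n, zdot d z l = 0 -> zdot d z (zeta (phi n)) = a n * zdot d z (eta n)) /\
    ((forall n, eta n = vzero) \/
     (forall n, (V (eta n) /\ dot d (eta n) l = 0) /\ dot d (eta n) (eta n) = 1)).
Proof.
  intros HV Vl Hl Vzeta. pose proof HV as (_ & _ & Vadd & Vscal).
  set (r n t := zeta n t + (- dot d (zeta n) l) * l t).
  assert (Vr : forall n, V (r n)) by (intros n; apply Vadd; [apply Vzeta|apply Vscal, Vl]).
  assert (Hrl : forall n, dot d (r n) l = 0).
  { intros n. unfold r. rewrite dot_add_l, dot_scal_l, Hl. ring. }
  assert (Hzr : forall z n, zdot d z l = 0 -> zdot d z (zeta n) = zdot d z (r n)).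
  { intros z n Hz. unfold r. rewrite zdot_add, zdot_scal, Hz. ring. }
  destruct (eventually_or_infinitely_often (fun n => dot d (r n) (r n) = 0)) as [Hinf|[N Hfin]].
  - destruct (subseq_select (fun _ n => dot d (r n) (r n) <> 0)) as [phi [Hphi Hr]];
      [intros _; apply Hinf|].
    set (a n := sqrt (dot d (r (phi n)) (r (phi n)))).
    assert (Ha : forall n, 0 < a n).
    { intros n. apply sqrt_lt_R0. pose proof (dot_self_nonneg d (r (phi n))). specialize (Hr n). lra. }
    exists phi, a, (fun n t => / a n * r (phi n) t). split; [exact Hphi|split; [exact Ha|split]].
    + intros z n Hz. rewrite Hzr, zdot_scal by exact Hz. field. apply Rgt_not_eq, Ha.
    + right. intros n. split; [split|].
      * apply Vscal, Vr.
      * rewrite dot_scal_l, Hrl. ring.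
      * apply dot_normalize, Hr.
  - destruct (subseq_select (fun _ n => dot d (r n) (r n) = 0)) as [phi [Hphi Hr]].
    { intros _ M. exists (max N M). split; [lia|apply Hfin; lia]. }
    exists phi, (fun _ => 1), (fun _ => vzero). split; [exact Hphi|split; [intros; lra|split]].
    + intros z n Hz. rewrite Hzr by exact Hz.
      rewrite !zdot_vanishing; [ring|reflexivity|apply dot_self_eq0, Hr].
    + left. reflexivity.
Qed.

Lemma orthonormal_nil d : orthonormal d nil.
Proof. intros i j Hi. simpl in Hi. lia. Qed.

Lemma orthonormal_length_perp d V l m : V l -> dot d l l = 1 ->
  (forall E, orthonormal d E -> all_in V E -> (length E <= S m)%nat) ->
  forall E, orthonormal d E -> all_in (fun x => V x /\ dot d x l = 0) E -> (length E <= m)%nat.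
Proof.
  intros Vl Hl Hm E HE HEV.
  assert (Hcons : orthonormal d (l :: E)) by (apply orthonormal_cons; auto; apply HEV).
  assert (all_in V (l :: E)) as Hin by (intros [|j] Hj; simpl in *; [exact Vl|apply HEV; lia]).
  specialize (Hm _ Hcons Hin). simpl in Hm. lia.
Qed.

Lemma unit_subseq_limit d V (zeta : nat -> vec) : is_subspace d V ->
  (forall n, V (zeta n) /\ dot d (zeta n) (zeta n) = 1) ->
  exists phi l, strictly_increasing phi /\ V l /\ dot d l l = 1 /\
    forall z, Un_cv (fun n => zdot d z (zeta (phi n))) (zdot d z l).
Proof.
  intros HV Hzeta. pose proof HV as (VRd & _).
  destruct (unit_vec_cv_subseq d zeta) as (phi & Hphi & l & _ & Hl).
  { intros n. split; [apply VRd|]; apply Hzeta. }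
  exists phi, l. split; [exact Hphi|split; [|split]].
  - apply (subspace_closed d V (fun n => zeta (phi n))); [exact HV|intros; apply Hzeta|exact Hl].
  - apply (UL_sequence (fun n => dot d (zeta (phi n)) (zeta (phi n)))); [apply dot_cv; exact Hl|].
    apply cv_eventually_const. exists 0%nat. intros. apply Hzeta.
  - intros z. apply zdot_cv, Hl.
Qed.

Lemma Ezeta_limit_subseq_exists d m : forall V (zeta : nat -> vec), is_subspace d V ->
  (forall E, orthonormal d E -> all_in V E -> (length E <= m)%nat) ->
  (forall n, V (zeta n) /\ dot d (zeta n) (zeta n) = 1) ->
  exists phi, strictly_increasing phi /\ exists zs, orthonormal d zs /\ all_in V zs /\
    (1 <= length zs)%nat /\ Ezeta_limit d (fun n => zeta (phi n)) zs.
Proof.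
  induction m as [|m IH]; intros V zeta HV Hm Hzeta.
  { assert (Hone : orthonormal d (zeta 0%nat :: nil))
      by (apply orthonormal_cons; [apply orthonormal_nil|apply Hzeta|simpl; lia]).
    assert (Hin : all_in V (zeta 0%nat :: nil)) by (intros [|j] Hj; simpl in *; [apply Hzeta|lia]).
    specialize (Hm _ Hone Hin). simpl in Hm. lia. }
  destruct (unit_subseq_limit d V zeta HV Hzeta) as (phi1 & l & Hphi1 & Vl & Hl & Hcv).
  destruct (split_off_unit_subseq d V (fun n => zeta (phi1 n)) l HV Vl Hl)
    as (phi2 & a & eta & Hphi2 & Ha & Hsplit & [Hzero|Hunit]); [intros; apply Hzeta| |].
  - exists (fun n => phi1 (phi2 n)). split; [apply strictly_increasing_comp; assumption|].
    exists (l :: nil). split; [|split; [|split]].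
    + apply orthonormal_cons; [apply orthonormal_nil|exact Hl|simpl; lia].
    + intros [|j] Hj; simpl in *; [exact Vl|lia].
    + simpl. lia.
    + apply (Ezeta_limit_cons d _ eta a); [|exact Ha|exact Hsplit|apply Ezeta_limit_nil, Hzero].
      intros z. apply (cv_subseq (fun n => zdot d z (zeta (phi1 n)))); [apply Hcv|exact Hphi2].
  - destruct (IH _ eta (subspace_perp d V l HV) (orthonormal_length_perp d V l m Vl Hl Hm) Hunit)
      as (phi3 & Hphi3 & zs & Hzs & HzsV & Hlen & Hlim).
    exists (fun n => phi1 (phi2 (phi3 n))).
    split; [apply strictly_increasing_comp; [|apply strictly_increasing_comp]; assumption|].
    exists (l :: zs). split; [|split; [|split]].
    + apply orthonormal_cons; [exact Hzs|exact Hl|intros j Hj; apply HzsV, Hj].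
    + intros [|j] Hj; simpl in *; [exact Vl|apply HzsV; lia].
    + simpl. lia.
    + apply (Ezeta_limit_cons d _ (fun n => eta (phi3 n)) (fun n => a (phi3 n)));
        [|intros; apply Ha|intros; apply Hsplit; assumption|exact Hlim].
      intros z. apply (cv_subseq (fun n => zdot d z (zeta (phi1 n)))); [apply Hcv|].
      apply strictly_increasing_comp; assumption.
Qed.

Lemma orthonormal_length_le_basis d V zs B : orthonormal d zs -> all_in V zs ->
  basis_of V B -> (length zs <= length B)%nat.
Proof.
  intros Hzs HzsV (_ & _ & Bspan).
  assert (Hc : forall i, exists c : list R, (i < length zs)%nat ->
      forall t, nth i zs vzero t = lincomb c B t).
  { intros i. destruct (lt_dec i (length zs)) as [Hi|Hi].
    - destruct (Bspan _ (HzsV i Hi)) as [c [_ Hc]]. exists c. auto.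
    - exists nil. intros; lia. }
  apply (OrthonormalRank.orthonormal_length_le_span d (length B) zs B
    (fun i j => nth j (proj1_sig (constructive_indefinite_description _ (Hc i))) 0) Hzs).
  intros i t Hi _. destruct constructive_indefinite_description as [c Hci]. apply Hci, Hi.
Qed.

Theorem mainTheorem19 (d : nat) (Sigma : vec -> Prop) (zeta : nat -> vec)
  (hSigma : is_subspace d Sigma)
  (hzeta : forall n, Sigma (zeta n) /\ dot d (zeta n) (zeta n) = 1) :
  exists phi : nat -> nat,
    (forall n m, (n < m)%nat -> (phi n < phi m)%nat) /\
    exists zs : list vec,
      orthonormal d zs /\
      (forall j, (j < length zs)%nat -> Sigma (nth j zs vzero)) /\
      (1 <= length zs)%nat /\
      (forall B, basis_of Sigma B -> (length zs <= length B)%nat) /\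
      forall z : zvec,
        Un_cv (fun n => indic (Ezeta d (zeta (phi n)) z)) (indic (Ezetas d zs z)).
Proof.
  destruct (Ezeta_limit_subseq_exists d d Sigma zeta hSigma
    (fun E HE _ => OrthonormalRank.orthonormal_length_le_dim d E HE) hzeta)
    as (phi & Hphi & zs & Hzs & HzsSigma & Hlen & Hlim).
  exists phi. split; [exact Hphi|]. exists zs.
  split; [exact Hzs|split; [exact HzsSigma|split; [exact Hlen|split; [|exact Hlim]]]].
  intros B HB. exact (orthonormal_length_le_basis d Sigma zs B Hzs HzsSigma HB).
Qed.
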